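(* On the open subset of $\mathbb{R}^4$ with coordinates $(u_1,u_2,p_{u_1},p_{u_2})$ where $u_1\neq u_2$, with canonical Poisson bracket $\{u_i,p_{u_j}\}=\delta_{ij}$, $\{u_1,u_2\}=\{p_{u_1},p_{u_2}\}=0$, let $$H=\frac{u_1(2u_1+u_2)p_{u_1}^2}{u_1-u_2}+\frac{u_2(u_1+2u_2)p_{u_2}^2}{u_2-u_1}-2u_1^2-3u_1u_2-2u_2^2$$ and $$\begin{aligned}K=\frac{u_1^2u_2^2}{(u_2-u_1)^3}\Big(&(3u_1+u_2)p_{u_1}^4-(u_1+3u_2)p_{u_2}^4-8u_1p_{u_1}^3p_{u_2}+8u_2p_{u_1}p_{u_2}^3+6(u_1-u_2)p_{u_1}^2p_{u_2}^2\\&-2(u_1-u_2)(u_1+3u_2)p_{u_1}^2+8(u_1^2-u_2^2)p_{u_1}p_{u_2}-2(u_1-u_2)(3u_1+u_2)p_{u_2}^2-(u_1-u_2)^3\Big).\end{aligned}$$ Then $\{H,K\}=0$; i.e. $H$ (a natural Hamiltonian, quadratic in momenta) and $K$ (quartic in momenta) define an integrable system with two degrees of freedom.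
   Context: The canonical Poisson bracket is $\{f,g\}=\sum_{i=1}^2\left(\frac{\partial f}{\partial u_i}\frac{\partial g}{\partial p_{u_i}}-\frac{\partial f}{\partial p_{u_i}}\frac{\partial g}{\partial u_i}\right)$. *)

From Stdlib Require Import Reals Lra.
Open Scope R_scope.

Definition H (u1 u2 p1 p2 : R) : R :=
  u1 * (2*u1 + u2) * p1^2 / (u1 - u2)
  + u2 * (u1 + 2*u2) * p2^2 / (u2 - u1)
  - 2*u1^2 - 3*u1*u2 - 2*u2^2.

Definition K (u1 u2 p1 p2 : R) : R :=
  u1^2 * u2^2 / (u2 - u1)^3 *
  ( (3*u1 + u2) * p1^4 - (u1 + 3*u2) * p2^4
    - 8*u1 * p1^3 * p2 + 8*u2 * p1 * p2^3
    + 6*(u1 - u2) * p1^2 * p2^2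
    - 2*(u1 - u2)*(u1 + 3*u2) * p1^2
    + 8*(u1^2 - u2^2) * p1 * p2
    - 2*(u1 - u2)*(3*u1 + u2) * p2^2
    - (u1 - u2)^3 ).

Definition has_partials (F : R -> R -> R -> R -> R) (u1 u2 p1 p2 d1 d2 d3 d4 : R) : Prop :=
  derivable_pt_lim (fun t => F t u2 p1 p2) u1 d1 /\
  derivable_pt_lim (fun t => F u1 t p1 p2) u2 d2 /\
  derivable_pt_lim (fun t => F u1 u2 t p2) p1 d3 /\
  derivable_pt_lim (fun t => F u1 u2 p1 t) p2 d4.

(* Canonical Poisson bracket {F,G} = sum_i (dF/du_i dG/dp_i - dF/dp_i dG/du_i),
   given the partial derivatives (a_i of F, b_i of G). *)
Definition poisson_from_partials (a1 a2 a3 a4 b1 b2 b3 b4 : R) : R :=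
  (a1 * b3 - a3 * b1) + (a2 * b4 - a4 * b2).

From Stdlib Require Import Reals Lra.
From Coquelicot Require Import Coquelicot.
Open Scope R_scope.

(* K is the product of the prefactor u1^2 u2^2 / (u2 - u1)^3
   and a polynomial quartic in the momenta, so its partials come from the product
   rule; with all partials explicit, the vanishing of {H, K} is an identity of
   rational functions whose denominators are powers of u1 - u2. *)

Ltac nonzero_difference :=
  repeat apply Rmult_integral_contrapositive_currified;
  try lra;
  match goal with h : ?a <> ?b |- _ <> 0 => let e := fresh in intro e; apply h; lra end.

Ltac partial_derivative :=
  apply is_derive_Reals; auto_derive;
  [ repeat split; nonzero_difference
  | field; repeat split; nonzero_difference ].

Lemma has_partials_mult (F G : R -> R -> R -> R -> R) (u1 u2 p1 p2 a1 a2 a3 a4 b1 b2 b3 b4 : R) :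
  has_partials F u1 u2 p1 p2 a1 a2 a3 a4 ->
  has_partials G u1 u2 p1 p2 b1 b2 b3 b4 ->
  has_partials (fun x y z w => F x y z w * G x y z w) u1 u2 p1 p2
    (a1 * G u1 u2 p1 p2 + F u1 u2 p1 p2 * b1) (a2 * G u1 u2 p1 p2 + F u1 u2 p1 p2 * b2)
    (a3 * G u1 u2 p1 p2 + F u1 u2 p1 p2 * b3) (a4 * G u1 u2 p1 p2 + F u1 u2 p1 p2 * b4).
Proof.
  intros (dF1 & dF2 & dF3 & dF4) (dG1 & dG2 & dG3 & dG4).
  repeat split.
  - exact (derivable_pt_lim_mult (fun t => F t u2 p1 p2) (fun t => G t u2 p1 p2) u1 a1 b1 dF1 dG1).
  - exact (derivable_pt_lim_mult (fun t => F u1 t p1 p2) (fun t => G u1 t p1 p2) u2 a2 b2 dF2 dG2).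
  - exact (derivable_pt_lim_mult (fun t => F u1 u2 t p2) (fun t => G u1 u2 t p2) p1 a3 b3 dF3 dG3).
  - exact (derivable_pt_lim_mult (fun t => F u1 u2 p1 t) (fun t => G u1 u2 p1 t) p2 a4 b4 dF4 dG4).
Qed.

Definition H_u1 (u1 u2 p1 p2 : R) : R :=
  (2*u1^2 - 4*u1*u2 - u2^2) * p1^2 / (u1 - u2)^2
  + 3*u2^2 * p2^2 / (u2 - u1)^2 - 4*u1 - 3*u2.

Definition H_u2 (u1 u2 p1 p2 : R) : R :=
  3*u1^2 * p1^2 / (u1 - u2)^2
  + (2*u2^2 - 4*u1*u2 - u1^2) * p2^2 / (u2 - u1)^2 - 3*u1 - 4*u2.

Definition H_p1 (u1 u2 p1 : R) : R := 2 * u1 * (2*u1 + u2) * p1 / (u1 - u2).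

Definition H_p2 (u1 u2 p2 : R) : R := 2 * u2 * (u1 + 2*u2) * p2 / (u2 - u1).

Lemma H_has_partials (u1 u2 p1 p2 : R) : u1 <> u2 ->
  has_partials H u1 u2 p1 p2
    (H_u1 u1 u2 p1 p2) (H_u2 u1 u2 p1 p2) (H_p1 u1 u2 p1) (H_p2 u1 u2 p2).
Proof.
  intros Hne.
  unfold has_partials, H, H_u1, H_u2, H_p1, H_p2.
  repeat split; partial_derivative.
Qed.

Definition K_prefactor (u1 u2 : R) : R := u1^2 * u2^2 / (u2 - u1)^3.

Definition K_quartic (u1 u2 p1 p2 : R) : R :=
  (3*u1 + u2) * p1^4 - (u1 + 3*u2) * p2^4
  - 8*u1 * p1^3 * p2 + 8*u2 * p1 * p2^3
  + 6*(u1 - u2) * p1^2 * p2^2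
  - 2*(u1 - u2)*(u1 + 3*u2) * p1^2
  + 8*(u1^2 - u2^2) * p1 * p2
  - 2*(u1 - u2)*(3*u1 + u2) * p2^2
  - (u1 - u2)^3.

Definition K_prefactor_u1 (u1 u2 : R) : R := u1 * u2^2 * (u1 + 2*u2) / (u2 - u1)^4.

Definition K_prefactor_u2 (u1 u2 : R) : R := - (u1^2 * u2 * (2*u1 + u2)) / (u2 - u1)^4.

Definition K_quartic_u1 (u1 u2 p1 p2 : R) : R :=
  3*p1^4 - p2^4 - 8*p1^3*p2 + 6*p1^2*p2^2 - 4*(u1 + u2)*p1^2
  + 16*u1*p1*p2 - 4*(3*u1 - u2)*p2^2 - 3*(u1 - u2)^2.

Definition K_quartic_u2 (u1 u2 p1 p2 : R) : R :=
  p1^4 - 3*p2^4 + 8*p1*p2^3 - 6*p1^2*p2^2 - 4*(u1 - 3*u2)*p1^2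
  - 16*u2*p1*p2 + 4*(u1 + u2)*p2^2 + 3*(u1 - u2)^2.

Definition K_quartic_p1 (u1 u2 p1 p2 : R) : R :=
  4*(3*u1 + u2)*p1^3 - 24*u1*p1^2*p2 + 8*u2*p2^3 + 12*(u1 - u2)*p1*p2^2
  - 4*(u1 - u2)*(u1 + 3*u2)*p1 + 8*(u1^2 - u2^2)*p2.

Definition K_quartic_p2 (u1 u2 p1 p2 : R) : R :=
  - 4*(u1 + 3*u2)*p2^3 - 8*u1*p1^3 + 24*u2*p1*p2^2 + 12*(u1 - u2)*p1^2*p2
  + 8*(u1^2 - u2^2)*p1 - 4*(u1 - u2)*(3*u1 + u2)*p2.

Lemma K_prefactor_has_partials (u1 u2 p1 p2 : R) : u1 <> u2 ->
  has_partials (fun u1 u2 _ _ => K_prefactor u1 u2) u1 u2 p1 p2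
    (K_prefactor_u1 u1 u2) (K_prefactor_u2 u1 u2) 0 0.
Proof.
  intros Hne.
  unfold has_partials, K_prefactor, K_prefactor_u1, K_prefactor_u2.
  repeat split; partial_derivative.
Qed.

Lemma K_quartic_has_partials (u1 u2 p1 p2 : R) :
  has_partials K_quartic u1 u2 p1 p2
    (K_quartic_u1 u1 u2 p1 p2) (K_quartic_u2 u1 u2 p1 p2)
    (K_quartic_p1 u1 u2 p1 p2) (K_quartic_p2 u1 u2 p1 p2).
Proof.
  unfold has_partials, K_quartic, K_quartic_u1, K_quartic_u2, K_quartic_p1, K_quartic_p2.
  repeat split; partial_derivative.
Qed.

Definition K_u1 (u1 u2 p1 p2 : R) : R :=
  K_prefactor_u1 u1 u2 * K_quartic u1 u2 p1 p2 + K_prefactor u1 u2 * K_quartic_u1 u1 u2 p1 p2.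

Definition K_u2 (u1 u2 p1 p2 : R) : R :=
  K_prefactor_u2 u1 u2 * K_quartic u1 u2 p1 p2 + K_prefactor u1 u2 * K_quartic_u2 u1 u2 p1 p2.

Definition K_p1 (u1 u2 p1 p2 : R) : R := K_prefactor u1 u2 * K_quartic_p1 u1 u2 p1 p2.

Definition K_p2 (u1 u2 p1 p2 : R) : R := K_prefactor u1 u2 * K_quartic_p2 u1 u2 p1 p2.

Lemma K_has_partials (u1 u2 p1 p2 : R) : u1 <> u2 ->
  has_partials K u1 u2 p1 p2
    (K_u1 u1 u2 p1 p2) (K_u2 u1 u2 p1 p2) (K_p1 u1 u2 p1 p2) (K_p2 u1 u2 p1 p2).
Proof.
  intros Hne.
  (* [K] is convertible to [fun u1 u2 p1 p2 => K_prefactor u1 u2 * K_quartic u1 u2 p1 p2]. *)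
  pose proof (has_partials_mult _ _ _ _ _ _ _ _ _ _ _ _ _ _
    (K_prefactor_has_partials u1 u2 p1 p2 Hne) (K_quartic_has_partials u1 u2 p1 p2)) as M.
  rewrite !Rmult_0_l, !Rplus_0_l in M.
  exact M.
Qed.

Lemma poisson_H_K (u1 u2 p1 p2 : R) : u1 <> u2 ->
  poisson_from_partials
    (H_u1 u1 u2 p1 p2) (H_u2 u1 u2 p1 p2) (H_p1 u1 u2 p1) (H_p2 u1 u2 p2)
    (K_u1 u1 u2 p1 p2) (K_u2 u1 u2 p1 p2) (K_p1 u1 u2 p1 p2) (K_p2 u1 u2 p1 p2) = 0.
Proof.
  intros Hne.
  unfold poisson_from_partials, H_u1, H_u2, H_p1, H_p2, K_u1, K_u2, K_p1, K_p2,
    K_prefactor, K_prefactor_u1, K_prefactor_u2, K_quartic,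
    K_quartic_u1, K_quartic_u2, K_quartic_p1, K_quartic_p2.
  field; repeat split; nonzero_difference.
Qed.

Theorem mainTheorem4 :
  forall u1 u2 p1 p2 : R, u1 <> u2 ->
  exists a1 a2 a3 a4 b1 b2 b3 b4 : R,
    has_partials H u1 u2 p1 p2 a1 a2 a3 a4 /\
    has_partials K u1 u2 p1 p2 b1 b2 b3 b4 /\
    poisson_from_partials a1 a2 a3 a4 b1 b2 b3 b4 = 0.
Proof.
  intros u1 u2 p1 p2 Hne.
  exists (H_u1 u1 u2 p1 p2), (H_u2 u1 u2 p1 p2), (H_p1 u1 u2 p1), (H_p2 u1 u2 p2),
    (K_u1 u1 u2 p1 p2), (K_u2 u1 u2 p1 p2), (K_p1 u1 u2 p1 p2), (K_p2 u1 u2 p1 p2).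
  split; [|split].
  - exact (H_has_partials u1 u2 p1 p2 Hne).
  - exact (K_has_partials u1 u2 p1 p2 Hne).
  - exact (poisson_H_K u1 u2 p1 p2 Hne).
Qed.
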